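(* Let $\tau=e^{2\pi i/3}$, $q_1(t)=-t-1$, $q_\tau(t)=-t-\tau$, $q_{\tau^2}(t)=-t-\tau^2$, and let $t(i,j)$ be defined on the vertices $a_{i,j}$ of the following labelled graph: vertices (row $1$: $a_{1,1}$; rows $2,3$: $a_{i,1},a_{i,2}$; for $i\ge4$, $1\le j\le\frac i2+1$ if $i$ even, $1\le j\le\frac{i-1}{2}+1$ if $i$ odd); edges $a_{1,1}\to a_{2,1}$ labelled $q_\tau$, $a_{1,1}\to a_{2,2}$ labelled $q_{\tau^2}$, and for $k\ge1$, $1\le j\le k+1$: $a_{2k,j}\to a_{2k+1,j}$ labelled $q_1$, $a_{2k+1,j}\to a_{2k+2,j}$ labelled $q_\tau$, $a_{2k+1,j}\to a_{2k+2,j+1}$ labelled $q_{\tau^2}$; $t(1,1)=-2$ and $t(i,j)$ is obtained from $-2$ by applying the maps labelling the edges along a directed path from $a_{1,1}$ to $a_{i,j}$. Then \[\frac{t(i,j)-1}{-2-\tau}=c(i,j)+d(i,j)\,\tau\in\mathbb{Z}[\tau],\] where $c(1,1)=1$, $d(1,1)=-1$, and for $i\ge2$: - if $i$ is even: for $j=1$, $c(i,1)=0$, $d(i,1)=\frac i2$; for $2\le j\le \frac i2+1$, $c(i,j)=-(j-1)$, $d(i,j)=\frac i2+1-j$; - if $i$ is odd: for $j=1$, $c(i,1)=1$, $d(i,1)=-\frac{i-1}{2}-1$; for $2\le j\le\frac{i-1}{2}+1$, $c(i,j)=1+(j-1)$, $d(i,j)=-\frac{i-1}{2}-1+(j-1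)$.
   Context: Here $\tau$ is a primitive cube root of unity, so $1+\tau+\tau^2=0$. In the paper, $t(i,j)$ is the parameter of the elliptic pencil at entry $a_{i,j}$ of a diagram of bifurcations of Cremona maps, the recursion above describing how the parameter changes. *)

From mathcomp Require Import all_boot all_order all_algebra all_field.
Set Implicit Arguments. Unset Strict Implicit. Unset Printing Implicit Defensive.
Import Order.TTheory GRing.Theory Num.Theory.
Local Open Scope ring_scope.

Inductive label := L1 | Ltau | Ltau2.

Definition qmap (tau : algC) (l : label) (t : algC) : algC :=
  match l with
  | L1 => - t - 1
  | Ltau => - t - tau
  | Ltau2 => - t - tau ^+ 2
  end.

(* Vertices a_{i,j} of the diagram (1-indexed). For i >= 2,
   j ranges over 1 <= j <= i/2 + 1 (i even) or (i-1)/2 + 1 (i odd), i.e. i./2 + 1. *)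
Definition vertex (i j : nat) : Prop :=
  (i = 1 /\ j = 1)%N \/ (2 <= i /\ 1 <= j <= i./2 + 1)%N.

Definition edge (v w : nat * nat) (l : label) : Prop :=
  (v = (1, 1)%N /\ w = (2, 1)%N /\ l = Ltau)
  \/ (v = (1, 1)%N /\ w = (2, 2)%N /\ l = Ltau2)
  \/ (exists k j : nat, (1 <= k)%N /\ (1 <= j <= k + 1)%N /\
        ((v = (k.*2, j) /\ w = (k.*2 + 1, j) /\ l = L1)
         \/ (v = (k.*2 + 1, j) /\ w = (k.*2 + 2, j) /\ l = Ltau)
         \/ (v = (k.*2 + 1, j) /\ w = (k.*2 + 2, j + 1) /\ l = Ltau2)))%N.

Fixpoint is_path (v : nat * nat) (p : seq ((nat * nat) * label)) : Prop :=
  match p with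
  | [::] => True
  | (w, l) :: p' => edge v w l /\ is_path w p'
  end.

Definition path_end (v : nat * nat) (p : seq ((nat * nat) * label)) : nat * nat :=
  last v (map fst p).

Definition path_value (tau : algC) (p : seq ((nat * nat) * label)) (t0 : algC) : algC :=
  foldl (fun t s => qmap tau s.2 t) t0 p.

Definition cc (i j : nat) : int :=
  if i == 1%N then 1%Z
  else if ~~ odd i then
    (if j == 1%N then 0%Z else - (j.-1)%:Z)
  else
    (if j == 1%N then 1%Z else 1%Z + (j.-1)%:Z).

Definition dd (i j : nat) : int :=
  if i == 1%N then (-1)%Z
  else if ~~ odd i then
    (if j == 1%N then (i./2)%:Z else (i./2)%:Z + 1 - j%:Z)
  else
    (if j == 1%N then - (i./2)%:Z - 1 else - (i./2)%:Z - 1 + (j.-1)%:Z).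

From mathcomp Require Import all_boot all_order all_algebra all_field.
From mathcomp Require Import ring zify.
Set Implicit Arguments. Unset Strict Implicit. Unset Printing Implicit Defensive.
Import Order.TTheory GRing.Theory Num.Theory.
Local Open Scope ring_scope.

(* Under the rescaling u(t) = (t - 1) / (-2 - tau), each map q_c becomes an
   affine involution u |-> s_c - u, with s_1 = 1 - tau, s_tau = 1 and
   s_(tau^2) = -tau (this uses tau^2 + tau + 1 = 0).  On rows 2k and 2k + 1
   the closed forms of c(i, j) + d(i, j) tau transform in exactly this way
   along every edge, so the value reached along a path depends only on its
   endpoint.  Every vertex is reached row by row. *)

Definition label_shift (l : label) : int * int :=
  match l with L1 => (1, -1) | Ltau => (1, 0) | Ltau2 => (0, -1) end.

Definition coords (v : nat * nat) : int * int := (cc v.1 v.2, dd v.1 v.2).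

Lemma cc_double k j : (0 < k)%N -> (0 < j)%N -> cc k.*2 j = 1 - j%:Z.
Proof.
move=> k_gt0 j_gt0; rewrite /cc ifF ?odd_double /=; last by apply/eqP; lia.
by case: ifP => [/eqP -> //|_]; lia.
Qed.

Lemma dd_double k j : (0 < k)%N -> (0 < j)%N -> dd k.*2 j = k%:Z + 1 - j%:Z.
Proof.
move=> k_gt0 j_gt0; rewrite /dd ifF ?odd_double ?doubleK /=; last by apply/eqP; lia.
by case: ifP => [/eqP -> //|_]; lia.
Qed.

Lemma cc_double_add1 k j : (0 < k)%N -> (0 < j)%N -> cc (k.*2 + 1) j = j%:Z.
Proof.
move=> k_gt0 j_gt0; rewrite /cc ifF ?addn1 /= ?odd_double /=; last by apply/eqP; lia.
by case: ifP => [/eqP -> //|_]; lia.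
Qed.

Lemma dd_double_add1 k j : (0 < k)%N -> (0 < j)%N ->
  dd (k.*2 + 1) j = j%:Z - k%:Z - 2.
Proof.
move=> k_gt0 j_gt0.
rewrite /dd ifF ?addn1 /= ?odd_double ?uphalf_double /=; last by apply/eqP; lia.
by case: ifP => [/eqP -> //|_]; lia.
Qed.

Lemma pair_subE (a b c d : int) : (a, b) - (c, d) = (a - c, b - d).
Proof. by []. Qed.

Lemma coords_edge v w l : edge v w l -> coords w = label_shift l - coords v.
Proof.
case=> [[-> [-> ->]] | [[-> [-> ->]] | [k [j [k_gt0 [/andP [j_gt0 _] e]]]]]].
- by [].
- by [].
have kS : (k.*2 + 2 = k.+1.*2)%N by rewrite doubleS addn2.
rewrite /coords; case: e => [[-> [-> ->]] | [[-> [-> ->]] | [-> [-> ->]]]] /=;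
  rewrite ?kS cc_double ?dd_double ?cc_double_add1 ?dd_double_add1 ?addn1 //;
  by rewrite pair_subE; congr pair; lia.
Qed.

Section Rescale.

Variable tau : algC.
Hypothesis htau : tau ^+ 2 + tau + 1 = 0.

Definition embed (x : int * int) : algC := x.1%:~R + x.2%:~R * tau.

Definition rescale (t : algC) : algC := (t - 1) / (-2 - tau).

Lemma embedB x y : embed (x - y) = embed x - embed y.
Proof. by rewrite /embed /= !rmorphB /=; ring. Qed.

Lemma neg2_sub_tau_neq0 : -2 - tau != 0.
Proof.
apply/eqP => D0.
have : 3%:R = (tau ^+ 2 + tau + 1) + (tau - 1) * (-2 - tau) :> algC by ring.
by rewrite htau D0 mulr0 addr0 => /eqP; rewrite pnatr_eq0.
Qed.

Lemma eq_by_tau_relation (k x y : algC) :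
  x - y = k * (tau ^+ 2 + tau + 1) -> x = y.
Proof. by rewrite htau mulr0 => /eqP; rewrite subr_eq0 => /eqP. Qed.

Lemma rescale_qmap l t :
  rescale (qmap tau l t) = embed (label_shift l) - rescale t.
Proof.
apply: (mulIf neg2_sub_tau_neq0).
rewrite mulrBl !divfK ?neg2_sub_tau_neq0 // /embed.
case: l => /=.
- by apply: (eq_by_tau_relation (k := -1)); ring.
- by ring.
- by apply: (eq_by_tau_relation (k := -2)); ring.
Qed.

Lemma rescale_start : rescale (-2) = embed (coords (1, 1)%N).
Proof.
apply: (mulIf neg2_sub_tau_neq0).
rewrite divfK ?neg2_sub_tau_neq0 // /embed /coords /cc /dd /=.
by apply: (eq_by_tau_relation (k := -1)); ring.
Qed.

Lemma rescale_path v p t : is_path v p -> rescale t = embed (coords v) ->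
  rescale (path_value tau p t) = embed (coords (path_end v p)).
Proof.
elim: p v t => [|[w l] p IH] v t //= [e pw] ht.
by apply: IH pw _; rewrite rescale_qmap ht (coords_edge e) embedB.
Qed.

End Rescale.

Definition reachable (v : nat * nat) : Prop :=
  exists p, is_path (1, 1)%N p /\ path_end (1, 1)%N p = v.

Lemma is_path_rcons v p w l :
  is_path v p -> edge (path_end v p) w l -> is_path v (rcons p (w, l)).
Proof.
elim: p v => [|[u m] p IH] v /=; first by [].
by move=> [e pu] he; split => //; apply: IH.
Qed.

Lemma path_end_rcons v p w l : path_end v (rcons p (w, l)) = w.
Proof. by rewrite /path_end map_rcons last_rcons. Qed.

Lemma reachable_edge v w l : reachable v -> edge v w l -> reachable w.
Proof.
move=> [p [pv <-]] e; exists (rcons p (w, l)).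
by split; [apply: is_path_rcons | apply: path_end_rcons].
Qed.

Section RowEdges.

Variables k j : nat.
Hypotheses (k_gt0 : (0 < k)%N) (j_bound : (0 < j <= k + 1)%N).

Lemma edge_L1 : edge (k.*2, j) (k.*2 + 1, j)%N L1.
Proof. by right; right; exists k, j; do 2 split => //; left. Qed.

Lemma edge_Ltau : edge (k.*2 + 1, j)%N (k.*2 + 2, j)%N Ltau.
Proof. by right; right; exists k, j; do 2 split => //; right; left. Qed.

Lemma edge_Ltau2 : edge (k.*2 + 1, j)%N (k.*2 + 2, j + 1)%N Ltau2.
Proof. by right; right; exists k, j; do 2 split => //; right; right. Qed.

End RowEdges.

Lemma reachable_even k j : (0 < k)%N -> (0 < j <= k + 1)%N -> reachable (k.*2, j).
Proof.
have start : reachable (1, 1)%N by exists [::].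
elim: k j => [//|[|k] IH] j _ hj.
  case: j hj => [|[|[|j]]] // _.
  - by apply: reachable_edge start _; left.
  - by apply: reachable_edge start _; right; left.
have odd_row j' : (0 < j' <= k.+2)%N -> reachable (k.+1.*2 + 1, j').
  by move=> hj'; apply: reachable_edge (IH j' _ _) (edge_L1 _ _); rewrite ?addn1.
rewrite doubleS -addn2.
case: j hj => [|[|j]] // hj.
- by apply: reachable_edge (odd_row 1%N _) (edge_Ltau _ _).
- rewrite -[j.+2]addn1; apply: reachable_edge (odd_row j.+1 _) (edge_Ltau2 _ _); lia.
Qed.

Lemma reachable_vertex i j : vertex i j -> reachable (i, j).
Proof.
case=> [[-> ->] | [i_ge2 hj]]; first by exists [::].
have k_gt0 : (0 < i./2)%N by lia.
rewrite -(odd_double_half i) addnC; case: (odd i) => /=.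
- exact: reachable_edge (reachable_even k_gt0 hj) (edge_L1 k_gt0 hj).
- by rewrite addn0; apply: reachable_even.
Qed.

Theorem mainTheorem3 (tau : algC) (htau : tau ^+ 2 + tau + 1 = 0)
    (him : 0 < 'Im tau) (i j : nat) (hv : vertex i j) :
  (exists p, is_path (1, 1)%N p /\ path_end (1, 1)%N p = (i, j))
  /\ (forall p, is_path (1, 1)%N p -> path_end (1, 1)%N p = (i, j) ->
        (path_value tau p (-2) - 1) / (-2 - tau)
        = (cc i j)%:~R + (dd i j)%:~R * tau).
Proof.
split; first exact: reachable_vertex.
move=> p p_path p_end.
rewrite -[LHS]/(rescale tau _) -[RHS]/(embed tau (coords (i, j))) -p_end.
exact (rescale_path htau p_path (rescale_start htau)).
Qed.
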